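(* Let $\mathfrak L=\mathbb V\oplus\mathbb W$ be a color gLt-algebra admitting a quasi-multiplicative basis $\mathfrak B=\{e_i\}_{i\in I}$ of $\mathbb W\neq 0$. The relation $\sim$ on $I$ defined by $i\sim j$ if and only if $i$ is connected to $j$ is an equivalence relation.
   Context: Let $\mathbb F$ be a field, $\mathbb G$ an abelian group, $n\ge 2$, and $\epsilon:\mathbb G\times\mathbb G\to\mathbb F\setminus\{0\}$ a bicharacter ($\epsilon(k,g+h)=\epsilon(k,g)\epsilon(k,h)$, $\epsilon(g+h,k)=\epsilon(g,k)\epsilon(h,k)$, $\epsilon(g,h)\epsilon(h,g)=1$). A graded $n$-ary algebra is a $\mathbb G$-graded vector space $\mathfrak L=\bigoplus_{g\in\mathbb G}\mathfrak L_g$ with an $n$-linear map $\langle\cdot,\dots,\cdot\rangle:\mathfrak L^n\to\mathfrak L$ such that $\langle\mathfrak L_{g_1},\dots,\mathfrak L_{g_n}\rangle\subset\mathfrak L_{g_1+\dots+g_n}$. For $\sigma\in\mathbb S_n$ write $\langle x_1,\dots,x_n\rangle_\sigma:=\langle x_{\sigma(1)},\dots,x_{\sigma(n)}\rangle$; for subsets $A_1,\dots,A_n$, $\langle A_1,\dots,A_n\rangle_\sigma$ denotes the linear span of all $\langle x_1,\dots,x_n\rangle_\sigma$ with $x_r\in A_r$. A color gLt-algebra is a graded $n$-ary algebra satisfying, for each $k=1,\dots,n$ and fixed scalars $\alpha^{\sigma_1,\sigma_2}_{i,j,k}\in\mathbb F$, the color version (each term on the right multiplied by the product of values of $\epsilon$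 on the degrees of the homogeneous arguments transposed in passing from the left-hand order to the order of that term) of the identity $\langle y_1,\dots,y_{k-1},\langle x_1,\dots,x_n\rangle,y_k,\dots,y_{n-1}\rangle=\sum_{1\le i,j\le n,\,\sigma_1\in\mathbb S_n,\,\sigma_2\in\mathbb S_{n-1}}\alpha^{\sigma_1,\sigma_2}_{i,j,k}\langle x_{\sigma_1(1)},\dots,x_{\sigma_1(i-1)},\langle y_{\sigma_2(1)},\dots,y_{\sigma_2(j-1)},x_{\sigma_1(i)},y_{\sigma_2(j)},\dots,y_{\sigma_2(n-1)}\rangle,x_{\sigma_1(i+1)},\dots,x_{\sigma_1(n)}\rangle$. $\mathfrak L$ admits a quasi-multiplicative basis if $\mathfrak L=\mathbb V\oplus\mathbb W$ with $\mathbb V$, $\mathbb W\ne0$ graded subspaces and $\mathfrak B=\{e_i\}_{i\in I}$ a basis of homogeneous elements of $\mathbb W$ such that: (1) for $i_1,\dots,i_n\in I$, either $\langle e_{i_1},\dots,e_{i_n}\rangle\in\mathbb Fe_j$ for some $j\in I$ or $\langle e_{i_1},\dots,e_{i_n}\rangle\in\mathbb V$; (2) for $0<k<n$, $i_1,\dots,i_k\in I$ and $\sigma\in\mathbb S_n$, $\langle e_{i_1},\dots,e_{i_k},\mathbb V,\dots,\mathbb V\rangle_\sigma\subset\mathbb Fe_{j_\sigma}$ for some $j_\sigma\in I$; (3) either $\langle\mathbb V,\dots,\mathbb V\rangle\subset\mathbb Fe_j$ for some $j\in I$ or $\langle\mathbb V,\dots,\mathbb V\rangle\subset\mathbb V$.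 Index maps: let $v$ be a symbol not in $I$, $\mathfrak I:=I\,\dot\cup\,\{v\}$; for each $j\in\mathfrak I$ take a new symbol $\overline j$, $\overline I:=\{\overline i:i\in I\}$, $\overline{\mathfrak I}:=\overline I\,\dot\cup\,\{\overline v\}$; set $\overline{(\overline j)}:=j$, $\overline J:=\{\overline j:j\in J\}$ for a set $J$ of symbols ($\overline\emptyset=\emptyset$). Put $u_j:=e_j$ for $j\in I$ and $u_v:=\mathbb V$. For $\sigma\in\mathbb S_n$ and $(j_1,\dots,j_n)\in\mathfrak I^n$ let $a_\sigma(j_1,\dots,j_n)=\{r\}$ if $r\in I$ and $0\ne\langle u_{j_1},\dots,u_{j_n}\rangle_\sigma\subset\mathbb Fe_r$, $=\{v\}$ if $0\ne\langle u_{j_1},\dots,u_{j_n}\rangle_\sigma\subset\mathbb V$, and $=\emptyset$ otherwise. For $j,j_2,\dots,j_n\in\mathfrak I$ let $b_\sigma(j,\overline j_2,\dots,\overline j_n):=\{x\in\mathfrak I: a_\sigma(x,j_2,\dots,j_n)=\{j\}\}$. Define $\mu$ on $(\mathfrak I\,\dot\cup\,\overline{\mathfrak I})\times(\mathfrak I^{n-1}\,\dot\cup\,\overline{\mathfrak I}^{n-1})$ with values subsets of $\mathfrak I$ by: $\mu(j,j_1,\dots,j_{n-1})=\bigcup_{\sigma\in\mathbb S_n}a_\sigma(j,j_1,\dots,j_{n-1})$ for $j,j_1,\dots,j_{n-1}\in\mathfrak I$; $\mu(j,\overline j_1,\dots,\overline j_{n-1})=\bigcup_{\sigma\in\mathbb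 S_n}b_\sigma(j,\overline j_1,\dots,\overline j_{n-1})$ for $j,j_1,\dots,j_{n-1}\in\mathfrak I$; $\mu(\overline j,j_1,\dots,j_{n-1})=\bigcup_{1\le k\le n-1,\ \sigma\in\mathbb S_n}b_\sigma(j_k,\overline j,\overline j_1,\dots,\overline j_{k-1},\overline j_{k+1},\dots,\overline j_{n-1})$ for $j,j_1,\dots,j_{n-1}\in\mathfrak I$; and $\mu(\overline j,\overline j_1,\dots,\overline j_{n-1})=\emptyset$. Define $\phi$ on pairs $(J,X)$ with $J\subset I\,\dot\cup\,\overline I$ and $X\in\mathfrak I^{n-1}\,\dot\cup\,\overline{\mathfrak I}^{n-1}$ by $\phi(\emptyset,X)=\emptyset$ and, for $J\ne\emptyset$, $\phi(J,X):=K\cup\overline K$ where $K:=\big(\bigcup_{j\in J}\mu(j,X)\big)\setminus\{v\}$. Connections: for distinct $i,j\in I$, $i$ is connected to $j$ if there exist $t\ge1$, $X_1,\dots,X_t\in\mathfrak I^{n-1}\,\dot\cup\,\overline{\mathfrak I}^{n-1}$ and $\widetilde i\in\{i,\overline i\}$ such that $\phi(\{\widetilde i\},X_1)\ne\emptyset$, $\phi(\phi(\{\widetilde i\},X_1),X_2)\neq\emptyset$, …, $\phi(\cdots\phi(\{\widetilde i\},X_1)\cdots,X_{t-1})\ne\emptyset$, and $j\in\phi(\cdots\phi(\phi(\{\widetilde i\},X_1),X_2)\cdots,X_t)$. By convention every $i\in I$ is connected to itself. *)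

From HB Require Import structures.
From mathcomp Require Import all_boot all_order all_algebra all_fingroup.
From Stdlib Require List RelationClasses.

Set Implicit Arguments.
Unset Strict Implicit.
Unset Printing Implicit Defensive.

Import GRing.Theory.
Local Open Scope ring_scope.

Section Defs.

Variables (F : fieldType) (G : zmodType) (L : lmodType F).

Definition subspace (P : L -> Prop) : Prop :=
  P 0 /\ (forall (a : F) (u w : L), P u -> P w -> P (a *: u + w)).

Definition span (S : L -> Prop) (z : L) : Prop :=
  exists s : seq (F * L),
    (forall p, List.In p s -> S p.2) /\ z = \sum_(p <- s) p.1 *: p.2.

Definition line (v : L) (z : L) : Prop := exists c : F, z = c *: v.

Definition grading (Lg : G -> L -> Prop) : Prop :=
  (forall g, subspace (Lg g)) /\
  (forall x : L, exists (s : seq G) (c : G -> L),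
       (forall g, Lg g (c g)) /\ x = \sum_(g <- s) c g) /\
  (forall (s : seq G) (c : G -> L), uniq s -> (forall g, Lg g (c g)) ->
       \sum_(g <- s) c g = 0 -> forall g, g \in s -> c g = 0).

Definition homogeneous (Lg : G -> L -> Prop) (x : L) : Prop := exists g, Lg g x.

Definition graded_subspace (Lg : G -> L -> Prop) (P : L -> Prop) : Prop :=
  subspace P /\
  (forall x, P x -> exists s : seq L,
       (forall y, List.In y s -> P y /\ homogeneous Lg y) /\ x = \sum_(y <- s) y).

Definition upd n (xs : 'I_n -> L) (p : 'I_n) (z : L) : 'I_n -> L :=
  fun q => if q == p then z else xs q.

Definition multilinear n (prod : ('I_n -> L) -> L) : Prop :=
  forall (xs : 'I_n -> L) (p : 'I_n) (a : F) (u w : L),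
    prod (upd xs p (a *: u + w)) = a *: prod (upd xs p u) + prod (upd xs p w).

Definition graded_prod n (Lg : G -> L -> Prop) (prod : ('I_n -> L) -> L) : Prop :=
  forall (g : 'I_n -> G) (xs : 'I_n -> L),
    (forall p, Lg (g p) (xs p)) -> Lg (\sum_p g p) (prod xs).

Definition bicharacter (eps : G -> G -> F) : Prop :=
  (forall g h, eps g h != 0) /\
  (forall k g h, eps k (g + h) = eps k g * eps k h) /\
  (forall g h k, eps (g + h) k = eps g k * eps h k) /\
  (forall g h, eps g h * eps h g = 1).

(** ** The color gLt identity.
    Arguments of both sides are the x_a (a : 'I_n) and y_b (b : 'I_(n-1)),
    encoded as [inl a] and [inr b]; all positions are 0-based
    (k0 = k-1, i0 = i-1, j0 = j-1). *)

Definition lhs_args n (k0 : 'I_n) (z : L) (y : 'I_(n-1) -> L) : 'I_n -> L :=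
  fun p => nth 0 (take k0 [seq y b | b <- enum 'I_(n-1)] ++
                  z :: drop k0 [seq y b | b <- enum 'I_(n-1)]) p.

Definition rhs_inner n (j0 i0 : 'I_n) (s1 : 'S_n) (s2 : 'S_(n-1))
    (x : 'I_n -> L) (y : 'I_(n-1) -> L) : 'I_n -> L :=
  fun p => nth 0 (take j0 [seq y (s2 b) | b <- enum 'I_(n-1)] ++
                  x (s1 i0) :: drop j0 [seq y (s2 b) | b <- enum 'I_(n-1)]) p.

Definition rhs_args n (prod : ('I_n -> L) -> L) (i0 j0 : 'I_n) (s1 : 'S_n)
    (s2 : 'S_(n-1)) (x : 'I_n -> L) (y : 'I_(n-1) -> L) : 'I_n -> L :=
  fun p => nth 0 (take i0 [seq x (s1 a) | a <- enum 'I_n] ++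
                  prod (rhs_inner j0 i0 s1 s2 x y)
                  :: drop i0.+1 [seq x (s1 a) | a <- enum 'I_n]) p.

(** position of each argument in the left-hand side *)
Definition posL n (k0 : 'I_n) (u : ('I_n + 'I_(n-1))%type) : nat :=
  match u with
  | inl a => (k0 + a)%N
  | inr b => if (b < k0)%N then nat_of_ord b else (b + n)%N
  end.

(** position of each argument in the term indexed by i0, j0, s1, s2 *)
Definition posR n (i0 j0 : 'I_n) (s1 : 'S_n) (s2 : 'S_(n-1))
    (u : ('I_n + 'I_(n-1))%type) : nat :=
  match u with
  | inl a => let p := nat_of_ord ((s1^-1)%g a) in
             if (p < i0)%N then p
             else if p == nat_of_ord i0 then (i0 + j0)%N else (p + (n - 1))%N
  | inr b => let q := nat_of_ord ((s2^-1)%g b) in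
             if (q < j0)%N then (i0 + q)%N else (i0 + q + 1)%N
  end.

Definition arg_deg n (dx : 'I_n -> G) (dy : 'I_(n-1) -> G)
    (u : ('I_n + 'I_(n-1))%type) : G :=
  match u with inl a => dx a | inr b => dy b end.

Definition color_factor n (eps : G -> G -> F) (k0 i0 j0 : 'I_n) (s1 : 'S_n)
    (s2 : 'S_(n-1)) (dx : 'I_n -> G) (dy : 'I_(n-1) -> G) : F :=
  \prod_(u : ('I_n + 'I_(n-1))%type)
    \prod_(w : ('I_n + 'I_(n-1))%type |
             (posL k0 u < posL k0 w)%N && (posR i0 j0 s1 s2 w < posR i0 j0 s1 s2 u)%N)
      eps (arg_deg dx dy u) (arg_deg dx dy w).

Definition color_gLt_identity n (Lg : G -> L -> Prop) (eps : G -> G -> F)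
    (prod : ('I_n -> L) -> L)
    (alpha : 'I_n -> 'I_n -> 'I_n -> 'S_n -> 'S_(n-1) -> F) : Prop :=
  forall (k0 : 'I_n) (x : 'I_n -> L) (y : 'I_(n-1) -> L)
         (dx : 'I_n -> G) (dy : 'I_(n-1) -> G),
    (forall a, Lg (dx a) (x a)) -> (forall b, Lg (dy b) (y b)) ->
    prod (lhs_args k0 (prod x) y) =
    \sum_(i0 : 'I_n) \sum_(j0 : 'I_n) \sum_(s1 : 'S_n) \sum_(s2 : 'S_(n-1))
       (alpha i0 j0 k0 s1 s2 * color_factor eps k0 i0 j0 s1 s2 dx dy)
         *: prod (rhs_args prod i0 j0 s1 s2 x y).

Definition color_gLt_algebra n (Lg : G -> L -> Prop) (eps : G -> G -> F)
    (prod : ('I_n -> L) -> L)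
    (alpha : 'I_n -> 'I_n -> 'I_n -> 'S_n -> 'S_(n-1) -> F) : Prop :=
  grading Lg /\ multilinear prod /\ graded_prod Lg prod /\
  color_gLt_identity Lg eps prod alpha.

Variable I : Type.

(** <A_1, ..., A_n>_sigma : span of all <x_{s 1}, ..., x_{s n}>, x_r in A_r *)
Definition bracket n (prod : ('I_n -> L) -> L) (s : 'S_n)
    (A : 'I_n -> L -> Prop) : L -> Prop :=
  span (fun z => exists x : 'I_n -> L,
                   (forall r, A r (x r)) /\ z = prod (fun p => x (s p))).

Definition quasi_mult_basis n (Lg : G -> L -> Prop) (prod : ('I_n -> L) -> L)
    (V W : L -> Prop) (e : I -> L) : Prop :=
  graded_subspace Lg V /\ graded_subspace Lg W /\
  (exists v, V v /\ v <> 0) /\ (exists w, W w /\ w <> 0) /\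
  (forall x, exists v w, V v /\ W w /\ x = v + w) /\
  (forall z, V z -> W z -> z = 0) /\
  (forall i, W (e i) /\ homogeneous Lg (e i)) /\
  (forall (s : seq I) (c : I -> F), List.NoDup s ->
     \sum_(i <- s) c i *: e i = 0 -> forall i, List.In i s -> c i = 0) /\
  (forall w, W w -> exists (s : seq I) (c : I -> F), w = \sum_(i <- s) c i *: e i) /\
  (forall ix : 'I_n -> I,
     (exists j, line (e j) (prod (fun p => e (ix p)))) \/
     V (prod (fun p => e (ix p)))) /\
  (forall k : nat, (0 < k < n)%N -> forall (ix : 'I_n -> I) (s : 'S_n),
     exists j, forall z,
       bracket prod s (fun r => if (r < k)%N then (fun t => t = e (ix r)) else V) z ->
       line (e j) z) /\
  ((exists j, forall z, bracket prod 1%g (fun _ => V) z -> line (e j) z) \/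
   (forall z, bracket prod 1%g (fun _ => V) z -> V z)).

(** ** Index maps.  The set \mathfrak I = I \dot\cup {v} is [option I]
    ([None] = v); barred symbols are tagged [inr], plain ones [inl]. *)

Definition uset (V : L -> Prop) (e : I -> L) (j : option I) : L -> Prop :=
  match j with Some i => fun z => z = e i | None => V end.

Definition tup n (l : seq (option I)) : 'I_n -> option I := fun p => nth None l p.

Definition a_map n (prod : ('I_n -> L) -> L) (V : L -> Prop) (e : I -> L)
    (s : 'S_n) (js : 'I_n -> option I) (r : option I) : Prop :=
  (exists z, bracket prod s (fun p => uset V e (js p)) z /\ z <> 0) /\
  (forall z, bracket prod s (fun p => uset V e (js p)) z ->
     match r with Some i => line (e i) z | None => V z end).

Definition b_map n (prod : ('I_n -> L) -> L) (V : L -> Prop) (e : I -> L)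
    (s : 'S_n) (j : option I) (l : seq (option I)) (x : option I) : Prop :=
  a_map prod V e s (@tup n (x :: l)) j.

Definition mu n (prod : ('I_n -> L) -> L) (V : L -> Prop) (e : I -> L)
    (j : (option I + option I)%type)
    (X : (('I_(n-1) -> option I) + ('I_(n-1) -> option I))%type)
    (x : option I) : Prop :=
  match j, X with
  | inl j, inl js =>
      exists s : 'S_n, a_map prod V e s (@tup n (j :: [seq js b | b <- enum 'I_(n-1)])) x
  | inl j, inr js =>
      exists s : 'S_n, b_map prod V e s j [seq js b | b <- enum 'I_(n-1)] x
  | inr j, inl js =>
      exists (k : 'I_(n-1)) (s : 'S_n),
        b_map prod V e s (js k) (j :: [seq js b | b <- enum 'I_(n-1) & b != k]) x
  | inr _, inr _ => False
  end.

Definition phi n (prod : ('I_n -> L) -> L) (V : L -> Prop) (e : I -> L)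
    (J : (I + I)%type -> Prop)
    (X : (('I_(n-1) -> option I) + ('I_(n-1) -> option I))%type) :
    (I + I)%type -> Prop :=
  fun t => let i := match t with inl i => i | inr i => i end in
    exists j : (I + I)%type, J j /\
      mu prod V e (match j with inl a => inl (Some a) | inr a => inr (Some a) end)
         X (Some i).

Definition phi_iter n (prod : ('I_n -> L) -> L) (V : L -> Prop) (e : I -> L)
    (J : (I + I)%type -> Prop)
    (Xs : seq (('I_(n-1) -> option I) + ('I_(n-1) -> option I))%type) :
    (I + I)%type -> Prop :=
  foldl (fun J' X => phi prod V e J' X) J Xs.

Definition connected n (prod : ('I_n -> L) -> L) (V : L -> Prop) (e : I -> L)
    (i j : I) : Prop :=
  i = j \/
  (i <> j /\
   exists (Xs : seq (('I_(n-1) -> option I) + ('I_(n-1) -> option I))%type)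
          (it : (I + I)%type),
     (0 < size Xs)%N /\ (it = inl i \/ it = inr i) /\
     (forall t : nat, (0 < t < size Xs)%N ->
        exists u, phi_iter prod V e (fun u' => u' = it) (take t Xs) u) /\
     phi_iter prod V e (fun u' => u' = it) Xs (inl j)).

End Defs.

From mathcomp Require Import all_boot all_order all_algebra all_fingroup.
From Stdlib Require RelationClasses.
From Stdlib Require Import FunctionalExtensionality Classical.

(* A connection from i to j is a chain of steps through phi.  Transitivity is
   concatenation of chains: phi only depends on the unbarred symbol, so the end
   of one chain can start the next.  Symmetry reverses every single step: the
   clauses of mu for plain and for barred arguments are mirror images of each
   other, since x \in b_sigma(j, l) means exactly a_sigma(x, l) = {j}.  The only
   step that is not literally mirrored, a barred first argument, is reversed by
   transposing the first two arguments of the product, which needs n >= 2. *)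

Set Implicit Arguments.
Unset Strict Implicit.

Local Open Scope ring_scope.

Definition unbar (I : Type) (t : I + I) : I := match t with inl i | inr i => i end.

Definition lift_sym (I : Type) (t : I + I) : option I + option I :=
  match t with inl i => inl (Some i) | inr i => inr (Some i) end.

Section Permuting.

Variables (F : fieldType) (L : lmodType F) (n : nat) (prod : ('I_n -> L) -> L).

Lemma bracket_perm (s t : 'S_n) (A A' : 'I_n -> L -> Prop) (z : L) :
    (forall r, A' r = A ((t^-1)%g r)) ->
  bracket prod s A z -> bracket prod (s * t)%g A' z.
Proof.
move=> hA [sq [hsq ->]]; exists sq; split=> // p /hsq [x [hx ->]].
exists (fun r => x ((t^-1)%g r)); split; first by move=> r; rewrite hA.
by congr prod; apply: functional_extensionality => q; rewrite permM permK.
Qed.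

Lemma a_map_perm (I : Type) (V : L -> Prop) (e : I -> L) (s t : 'S_n)
    (js js' : 'I_n -> option I) (r : option I) :
    (forall p, js' p = js ((t^-1)%g p)) ->
  a_map prod V e s js r -> a_map prod V e (s * t)%g js' r.
Proof.
move=> hjs [[z [hz nz]] hall]; split.
  by exists z; split=> //; apply: bracket_perm hz => p; rewrite hjs.
move=> y hy; apply: hall; rewrite -(mulgK t s).
by apply: bracket_perm hy => p; rewrite hjs invgK permK.
Qed.

Lemma tup_tperm01 (I : Type) (i0 i1 : 'I_n) (x y : option I)
    (l : seq (option I)) (p : 'I_n) :
    i0 = 0%N :> nat -> i1 = 1%N :> nat ->
  @tup I n (y :: x :: l) p = @tup I n (x :: y :: l) (tperm i0 i1 p).
Proof.
move=> h0 h1; case: tpermP => [->|->|]; rewrite /tup ?h0 ?h1 //.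
case: p => [[|[|k]] hk] np0 np1 //.
- by case: np0; apply: val_inj; rewrite /= h0.
- by case: np1; apply: val_inj; rewrite /= h1.
Qed.

End Permuting.

Section Linked.

Variables (F : fieldType) (L : lmodType F) (I : Type) (n : nat).
Variables (prod : ('I_n -> L) -> L) (V : L -> Prop) (e : I -> L).

Definition linked (i j : I) : Prop :=
  exists Xs it, [/\ (0 < size Xs)%N, unbar it = i &
                    phi_iter prod V e (fun u => u = it) Xs (inl j)].

Lemma phi_iter_cat J Xs Ys :
  phi_iter prod V e J (Xs ++ Ys) = phi_iter prod V e (phi_iter prod V e J Xs) Ys.
Proof. exact: foldl_cat. Qed.

Lemma phi_iter_rcons J Xs X :
  phi_iter prod V e J (rcons Xs X) = phi prod V e (phi_iter prod V e J Xs) X.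
Proof. by rewrite -cats1 phi_iter_cat. Qed.

Lemma phi_iter_unbar J Xs t : (0 < size Xs)%N ->
  phi_iter prod V e J Xs (inl (unbar t)) -> phi_iter prod V e J Xs t.
Proof. by case/lastP: Xs => // Xs X _; rewrite phi_iter_rcons; case: t => i; apply. Qed.

Lemma phi_iter_mono (J J' : I + I -> Prop) Xs :
    (forall u, J u -> J' u) ->
  forall t, phi_iter prod V e J Xs t -> phi_iter prod V e J' Xs t.
Proof.
elim: Xs J J' => [|X Xs IH] J J' hJ //=.
by apply: IH => u [j [/hJ Jj hmu]]; exists j.
Qed.

Lemma phi_iter_inhabited J Xs t : phi_iter prod V e J Xs t -> exists u, J u.
Proof.
elim: Xs J t => [|X Xs IH] J t /=; first by exists t.
by move=> /IH [_ [j [Jj _]]]; exists j.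
Qed.

Lemma phi_iter_take_inhabited J Xs t m :
  phi_iter prod V e J Xs t -> exists u, phi_iter prod V e J (take m Xs) u.
Proof. by rewrite -{1}(cat_take_drop m Xs) phi_iter_cat => /phi_iter_inhabited. Qed.

Lemma connected_linked i j : connected prod V e i j <-> i = j \/ linked i j.
Proof.
split=> [[-> | [_ [Xs [it [hXs [hit [_ hij]]]]]]] | [-> | hij]]; try by left.
  by right; exists Xs, it; split=> //; case: hit => ->.
have [-> | neq_ij] := classic (i = j); first by left.
have [Xs [it [hXs hit hij']]] := hij.
right; split=> //; exists Xs, it; split=> //; split.
  by case: it hit {hij hij'} => ? <-; [left | right].
by split=> // m _; apply: phi_iter_take_inhabited hij'.
Qed.

Lemma linked_step a X b : mu prod V e (lift_sym a) X (Some b) -> linked (unbar a) b.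
Proof. by move=> hmu; exists [:: X], a; split=> //; exists a. Qed.

Lemma linked_trans i j k : linked i j -> linked j k -> linked i k.
Proof.
move=> [Xs [it [hXs <- hij]]] [Ys [it' [hYs hj hjk]]].
exists (Xs ++ Ys), it; split=> //; first by rewrite size_cat addn_gt0 hXs.
rewrite phi_iter_cat; apply: phi_iter_mono hjk => _ ->.
by apply: phi_iter_unbar => //; rewrite hj.
Qed.

Hypothesis n_gt1 : (1 < n)%N.

Lemma mu_rev a X b : mu prod V e (lift_sym a) X (Some b) ->
  exists X' tb, unbar tb = b /\ mu prod V e (lift_sym tb) X' (Some (unbar a)).
Proof.
case: a X => a [] js //= hmu.
- by exists (inr js), (inl b).
- by exists (inl js), (inl b).
exists (inl js), (inr b); split=> //.
have [k [s hs]] := hmu; exists k, (s * tperm (Ordinal (ltnW n_gt1)) (Ordinal n_gt1))%g.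
by apply: a_map_perm hs => p; rewrite tpermV; apply: tup_tperm01.
Qed.

Lemma linked_rev_step a X b : mu prod V e (lift_sym a) X (Some b) -> linked b (unbar a).
Proof. by case/mu_rev=> X' [tb [<- /linked_step]]. Qed.

Lemma phi_iter_linked_rev J Xs t : (0 < size Xs)%N -> phi_iter prod V e J Xs t ->
  exists2 a, J a & linked (unbar t) (unbar a).
Proof.
elim/last_ind: Xs t => [//|Xs X IH] t _.
rewrite phi_iter_rcons => -[j [hj hmu]].
have ht : linked (unbar t) (unbar j) := linked_rev_step (a := j) hmu.
case: Xs IH hj => [|X0 Xs] IH hj; first by exists j.
by have [a Ja /(linked_trans ht)] := IH j isT hj; exists a.
Qed.

Lemma linked_sym i j : linked i j -> linked j i.
Proof.
move=> [Xs [it [hXs <- hij]]].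
by have [a -> hji] := phi_iter_linked_rev hXs hij.
Qed.

End Linked.

Theorem proposition3p5 (F : fieldType) (G : zmodType) (L : lmodType F)
  (n : nat) (I : Type) (eps : G -> G -> F) (Lg : G -> L -> Prop)
  (prod : ('I_n -> L) -> L)
  (alpha : 'I_n -> 'I_n -> 'I_n -> 'S_n -> 'S_(n-1) -> F)
  (V W : L -> Prop) (e : I -> L) :
  (2 <= n)%N ->
  bicharacter eps ->
  color_gLt_algebra Lg eps prod alpha ->
  quasi_mult_basis Lg prod V W e ->
  RelationClasses.Equivalence (connected prod V e).
Proof.
move=> n_gt1 _ _ _; split.
- by move=> i; apply/connected_linked; left.
- move=> i j /connected_linked [-> | hij]; apply/connected_linked; first by left.
  by right; apply: linked_sym hij.
- move=> i j k /connected_linked [-> // | hij] /connected_linked [<- | hjk].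
    by apply/connected_linked; right.
  by apply/connected_linked; right; apply: linked_trans hij hjk.
Qed.
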